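(* Let $(X,\Sigma)$ be a measurable space, $p$ a transition function on it with associated operator $A$ on $ba(X,\Sigma)$, and let $K=\{\mu_1,\dots,\mu_m\}$ be a finitely additive cycle of measures of $A$. If at least one cyclic measure $\mu_i$ is countably additive, then all cyclic measures $\mu_1,\dots,\mu_m$ and the mean measure $\frac1m\sum_{k=1}^m\mu_k$ are countably additive.
   Context: $X$ is an arbitrary infinite set and $\Sigma$ a $\sigma$-algebra of subsets of $X$ containing all one-point sets. $ba(X,\Sigma)$ denotes the space of bounded finitely additive real-valued measures on $\Sigma$. A transition function is a map $p(x,E)$, $x\in X$, $E\in\Sigma$, with $0\le p(x,E)\le 1$, $p(x,X)=1$, $p(\cdot,E)$ bounded $\Sigma$-measurable for every $E$, and $p(x,\cdot)$ countably additive for every $x$. The Markov operator is $A\mu(E)=\int_X p(x,E)\,\mu(dx)$ for $\mu\in ba(X,\Sigma)$. A cycle of measures of $A$ is a finite numbered set $K=\{\mu_1,\dots,\mu_m\}$ of pairwise different positive finitely additive measures with $A\mu_i=\mu_{i+1}$ ($1\le i\le m-1$) and $A\mu_m=\mu_1$; its mean measure is $\frac1m\sum_{k=1}^m\mu_k$. *)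

From HB Require Import structures.
From mathcomp Require Import all_boot all_order all_algebra.
From mathcomp Require Import all_classical all_reals all_analysis.
Set Implicit Arguments.
Unset Strict Implicit.
Unset Printing Implicit Defensive.
Import Order.TTheory GRing.Theory Num.Theory.
Import numFieldNormedType.Exports.
Local Open Scope classical_set_scope.
Local Open Scope ring_scope.

Section Defs.
Context {d : measure_display} {X : measurableType d} {R : realType}.

Definition fin_additive (mu : set X -> R) : Prop :=
  forall A B, measurable A -> measurable B -> A `&` B = set0 ->
    mu (A `|` B) = mu A + mu B.

(* positive finitely additive measure (automatically bounded by mu setT) *)
Definition pos_fa_measure (mu : set X -> R) : Prop :=
  fin_additive mu /\ forall A, measurable A -> 0 <= mu A.

Definition count_additive (mu : set X -> R) : Prop :=
  forall F : nat -> set X, (forall n, measurable (F n)) ->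
    trivIset setT F ->
    (fun n => \sum_(i < n) mu (F i)) @ \oo --> mu (\bigcup_n F n).

Definition transition_function (p : X -> set X -> R) : Prop :=
  [/\ forall x E, measurable E -> 0 <= p x E <= 1,
      forall x, p x setT = 1,
      forall E, measurable E -> measurable_fun setT (fun x => p x E)
                 /\ exists M : R, forall x, `|p x E| <= M &
      forall x, count_additive (p x)].

Definition meas_partition (n : nat) (E : nat -> set X) : Prop :=
  [/\ forall i, (i < n)%N -> measurable (E i),
      forall i j, (i < n)%N -> (j < n)%N -> i <> j -> E i `&` E j = set0 &
      \bigcup_(i in `I_n) E i = setT].

Definition lower_sum (f : X -> R) (mu : set X -> R) (n : nat)
  (E : nat -> set X) : R :=
  \sum_(i < n) inf (f @` E i) * mu (E i).

(* Integral of a bounded measurable function against a positive finitely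
   additive measure: supremum of lower sums over finite measurable
   partitions (Darboux-type definition of the finitely additive integral). *)
Definition fa_integral (f : X -> R) (mu : set X -> R) : R :=
  sup [set s | exists n E, meas_partition n E /\ s = lower_sum f mu n E].

Definition markov_op (p : X -> set X -> R) (mu : set X -> R) : set X -> R :=
  fun E => fa_integral (fun x => p x E) mu.

Definition meas_eq (mu nu : set X -> R) : Prop :=
  forall E, measurable E -> mu E = nu E.

Definition measure_cycle (p : X -> set X -> R) (m : nat)
  (mu : nat -> set X -> R) : Prop :=
  [/\ (0 < m)%N,
      forall i, (i < m)%N -> pos_fa_measure (mu i),
      forall i j, (i < m)%N -> (j < m)%N -> i <> j -> ~ meas_eq (mu i) (mu j),
      forall i, (i.+1 < m)%N -> meas_eq (markov_op p (mu i)) (mu i.+1) &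
      meas_eq (markov_op p (mu m.-1)) (mu 0%N)].

Definition mean_measure (m : nat) (mu : nat -> set X -> R) : set X -> R :=
  fun E => (m%:R)^-1 * \sum_(k < m) mu k E.

End Defs.

From HB Require Import structures.
From mathcomp Require Import all_boot all_order all_algebra.
From mathcomp Require Import all_classical all_reals all_analysis.
Import Order.TTheory GRing.Theory Num.Theory.
Import numFieldNormedType.Exports.
Local Open Scope classical_set_scope.
Local Open Scope ring_scope.

(* A positive finitely additive measure is countably additive iff it is
   continuous at the empty set along decreasing sequences.  If mu is
   countably additive and B n decreases to the empty set, so do the
   superlevel sets C n = {x | eps < p x (B n)}, because every p x is
   countably additive; bounding the integral of p(., B n) by
   mu (C n) + eps * mu X then shows that (A mu) (B n) tends to 0.  Hence A
   preserves countable additivity, which therefore propagates around the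
   cycle from one measure to all of them, and the mean measure is a linear
   combination of countably additive set functions. *)

Section cycle_of_measures.
Context {d : measure_display} {X : measurableType d} {R : realType}.

Section finite_additivity.
Context {mu : set X -> R} (mu_fa : fin_additive mu).

Lemma fin_additive_set0 : mu set0 = 0.
Proof.
have := mu_fa _ _ measurable0 measurable0 (setI0 set0).
by rewrite setU0 => /eqP; rewrite addrC -subr_eq subrr eq_sym => /eqP.
Qed.

Lemma fin_additive_setD A B : measurable A -> measurable B -> A `<=` B ->
  mu (B `\` A) = mu B - mu A.
Proof.
move=> mA mB AB; rewrite -{2}(setDUK AB) mu_fa ?setDIK //.
  by rewrite addrAC subrr add0r.
exact: measurableD.
Qed.

Lemma fin_additive_bigsetU n (F : nat -> set X) :
  (forall i, (i < n)%N -> measurable (F i)) ->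
  (forall i j, (i < n)%N -> (j < n)%N -> i <> j -> F i `&` F j = set0) ->
  mu (\big[setU/set0]_(i < n) F i) = \sum_(i < n) mu (F i).
Proof.
elim: n => [|n IH] mF dF; first by rewrite !big_ord0 fin_additive_set0.
have mF' i : (i < n)%N -> measurable (F i) by move/ltnW; exact: mF.
rewrite !big_ord_recr /= mu_fa ?IH //.
- by move=> i j /ltnW ? /ltnW ?; exact: dF.
- by apply: bigsetU_measurable => i _; exact: mF'.
- exact: mF.
rewrite -bigcup_mkord setI_bigcupl; apply/seteqP; split => x // [i ilt].
by rewrite dF ?ltnS ?(ltnW ilt) // => ein; move: ilt; rewrite ein /= ltnn.
Qed.

Lemma fin_additive_partition n E G : meas_partition n E -> measurable G ->
  \sum_(i < n) mu (E i `&` G) = mu G.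
Proof.
move=> [mE dE cE] mG.
rewrite -(fin_additive_bigsetU n (fun i => E i `&` G)).
- by rewrite -(bigcup_mkord n (fun i => E i `&` G)) -setI_bigcupl cE setTI.
- by move=> i ilt; apply: measurableI => //; exact: mE.
by move=> i j ilt jlt ij; rewrite setIACA dE // set0I.
Qed.

End finite_additivity.

Lemma pos_fa_measure_le (mu : set X -> R) A B : pos_fa_measure mu ->
  measurable A -> measurable B -> A `<=` B -> mu A <= mu B.
Proof.
move=> [mu_fa mu_ge0] mA mB AB.
by rewrite -subr_ge0 -fin_additive_setD //; apply/mu_ge0/measurableD.
Qed.

Section countable_additivity.
Implicit Types mu : set X -> R.

Definition continuous_at_set0 mu : Prop :=
  forall B : nat -> set X, (forall n, measurable (B n)) ->
    (forall n, B n.+1 `<=` B n) -> \bigcap_n B n = set0 ->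
    mu (B n) @[n --> \oo] --> 0.

Lemma count_additive_set0 mu : count_additive mu -> mu set0 = 0.
Proof.
move=> mu_ca; have := mu_ca _ (fun=> measurable0) (@trivIset_set0 _ _ setT).
rewrite bigcup0 //; under eq_fun do rewrite sumr_const card_ord.
move=> /[dup] /(cvgD (cvg_cst (mu set0))) musum_cvg.
rewrite -cvg_shiftS /=; under eq_fun do rewrite mulrS.
move=> /(cvg_unique (@Rhausdorff R) musum_cvg) /eqP.
by rewrite -subr_eq0 addrK => /eqP.
Qed.

Lemma count_additive_fin_additive mu : count_additive mu -> fin_additive mu.
Proof.
move=> mu_ca A B mA mB AB0.
have mAB i : measurable (bigcup2 A B i).
  by case: i => [|[|i]] //=; rewrite /bigcup2 /=.
have := mu_ca _ mAB; rewrite -trivIset_bigcup2 bigcup2E => /(_ AB0) muAB.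
apply: (cvg_unique (@Rhausdorff R) muAB); apply: cvg_near_cst; near=> n.
have n2 : (2 <= n)%N by near: n; exists 2%N.
rewrite -(subnKC n2) big_split_ord !big_ord_recl big_ord0 big1 => [|i _].
  by rewrite /= !addr0.
by rewrite /bigcup2 /= count_additive_set0.
Unshelve. all: by end_near.
Qed.

Lemma count_additive_continuous_at_set0 mu :
  count_additive mu -> continuous_at_set0 mu.
Proof.
move=> mu_ca B mB decrB capB0; have mu_fa := count_additive_fin_additive _ mu_ca.
have leB i j : (i <= j)%N -> B j `<=` B i.
  move=> /subnK <-; elim: (j - i)%N => //= k IH.
  exact: subset_trans (decrB _) IH.
pose F k := B k `\` B k.+1.
have mF k : measurable (F k) by exact: measurableD.
have tF : trivIset setT F.
  apply: ltn_trivIset => k l kl; apply/seteqP; split => x // [[_ nBk] [Blx _]].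
  by apply: nBk; exact: leB kl x Blx.
have cupF : \bigcup_k F k = B 0%N.
  apply/seteqP; split => [x [k _ [Bkx _]]|x B0x].
    exact: leB (leq0n k) x Bkx.
  have [n nBnx] : exists n, ~ B n x.
    apply: contrapT => nex; suff : (\bigcap_n B n) x by rewrite capB0.
    by move=> n _; apply: contrapT => nBnx; apply: nex; exists n.
  elim: n nBnx => [//|n IH] nBnx.
  by have [Bnx|/IH] := pselect (B n x); first by exists n.
have psum n : \sum_(i < n) mu (F i) = mu (B 0%N) - mu (B n).
  elim: n => [|n IH]; first by rewrite big_ord0 subrr.
  by rewrite big_ord_recr /= IH fin_additive_setD // addrA subrK.
have -> : (fun n => mu (B n)) = (fun n => mu (B 0%N) - \sum_(i < n) mu (F i)).
  by apply/funext => n; rewrite psum opprB addrC subrK.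
rewrite -[X in _ --> X](subrr (mu (B 0%N))) -cupF.
by apply: cvgB; [exact: cvg_cst | exact: mu_ca].
Qed.

Lemma continuous_at_set0_count_additive mu :
  fin_additive mu -> continuous_at_set0 mu -> count_additive mu.
Proof.
move=> mu_fa mu_cont F mF tF.
pose G n := \big[setU/set0]_(i < n) F i.
have mG n : measurable (G n) by exact: bigsetU_measurable.
have mU : measurable (\bigcup_n F n) by exact: bigcup_measurable.
have psum n : \sum_(i < n) mu (F i) = mu (G n).
  rewrite fin_additive_bigsetU // => i j _ _ /eqP.
  by move/trivIsetP: tF; apply.
pose B n := \bigcup_n F n `\` G n.
have muB0 : mu (B n) @[n --> \oo] --> 0.
  apply: mu_cont => [n|n|]; first exact: measurableD.
    by apply: setDS; rewrite /G big_ord_recr; exact: subsetUl.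
  apply/seteqP; split => x // capx; have [[k _ Fkx] _] := capx 0%N I.
  by have [_] := capx k.+1 I; apply; exact: (@bigsetU_sup _ k k.+1 F).
have -> : (fun n => \sum_(i < n) mu (F i)) =
          (fun n => mu (\bigcup_n F n) - mu (B n)).
  apply/funext => n; rewrite psum fin_additive_setD //.
    by rewrite opprB addrC subrK.
  exact: bigsetU_bigcup.
rewrite -[X in _ --> X]subr0; exact: cvgB (cvg_cst _) muB0.
Qed.

Lemma count_additive_sum m (mu : nat -> set X -> R) :
  (forall k, (k < m)%N -> count_additive (mu k)) ->
  count_additive (fun E => \sum_(k < m) mu k E).
Proof.
move=> mu_ca F mF tF /=; under eq_fun do rewrite exchange_big.
by apply: cvg_big => // [|k _]; [exact: add_continuous | exact: mu_ca].
Qed.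

Lemma count_additive_scale (c : R) mu :
  count_additive mu -> count_additive (fun E => c * mu E).
Proof.
move=> mu_ca F mF tF /=; under eq_fun do rewrite -mulr_sumr.
exact: cvgMl_tmp (mu_ca F mF tF).
Qed.

End countable_additivity.

Section integral_bound.
Context {mu : set X -> R} {f : X -> R} {C : set X} {eps : R}.
Context (mu_pos : pos_fa_measure mu) (f01 : forall x, 0 <= f x <= 1).
Context (mC : measurable C) (eps_ge0 : 0 <= eps).
Context (f_le_eps : forall x, ~ C x -> f x <= eps).

Lemma inf_image_mul_le E : measurable E ->
  inf (f @` E) * mu E <= mu (E `&` C) + eps * mu E.
Proof.
move=> mE; have muE_ge0 : 0 <= mu E by exact: mu_pos.2.
have f_lb : has_lbound (f @` E) by exists 0 => _ [y _ <-]; case/andP: (f01 y).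
have inf_le x : E x -> inf (f @` E) <= f x by move/(imageP f); exact: ge_inf.
have [EC|/nonsubset[x [Ex nCx]]] := pselect (E `<=` C).
  rewrite setIidl // -[X in X <= _]addr0 mulrC.
  apply: lerD; last exact: mulr_ge0.
  rewrite ler_piMr //; have [->|/set0P[x Ex]] := eqVneq E set0.
    by rewrite image_set0 inf0.
  exact: le_trans (inf_le x Ex) (andP (f01 x)).2.
apply: le_trans (ler_wpM2r muE_ge0 (le_trans (inf_le x Ex) (f_le_eps x nCx))) _.
by rewrite lerDr; apply/mu_pos.2/measurableI.
Qed.

Lemma fa_integral_le : fa_integral f mu <= mu C + eps * mu setT.
Proof.
have [mu_fa _] := mu_pos.
apply: ge_sup.
  exists (lower_sum f mu 1 (fun=> setT)), 1%N, (fun=> setT); split=> //.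
  split=> // [i j|]; first by rewrite !ltnS !leqn0 => /eqP -> /eqP ->.
  by apply/seteqP; split=> // x _; exists 0%N.
move=> _ [n [E [partE ->]]].
rewrite -(fin_additive_partition mu_fa _ _ _ partE mC).
rewrite -(fin_additive_partition mu_fa _ _ _ partE measurableT).
rewrite mulr_sumr -big_split; apply: ler_sum => i _.
rewrite setIT; apply: inf_image_mul_le.
by case: partE => + _ _; apply.
Qed.

End integral_bound.

Lemma transition_superlevel_measurable (p : X -> set X -> R) E (eps : R) :
  transition_function p -> measurable E -> measurable [set x | eps < p x E].
Proof.
case=> _ _ p_meas _ mE; have [mpE _] := p_meas E mE.
have := mpE measurableT _ (measurable_itv `]eps, +oo[); rewrite setTI.
by congr measurable; apply/seteqP; split=> x /=; rewrite in_itv /= andbT.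
Qed.

Lemma transition_superlevel_bigcap (p : X -> set X -> R) B (eps : R) :
  transition_function p -> 0 < eps -> (forall n, measurable (B n)) ->
  (forall n, B n.+1 `<=` B n) -> \bigcap_n B n = set0 ->
  \bigcap_n [set x | eps < p x (B n)] = set0.
Proof.
case=> _ _ _ p_ca eps_gt0 mB decrB capB0; apply/seteqP; split=> x // capx.
have /cvgr0_norm_lt/(_ eps eps_gt0)[N _ pxB_lt] :=
  count_additive_continuous_at_set0 _ (p_ca x) B mB decrB capB0.
have := lt_le_trans (capx N I) (ler_norm _).
by rewrite ltNge (ltW (pxB_lt N (leqnn N))).
Qed.

Lemma markov_op_count_additive (p : X -> set X -> R) (mu nu : set X -> R) :
  transition_function p -> pos_fa_measure mu -> count_additive mu ->
  pos_fa_measure nu -> meas_eq (markov_op p mu) nu -> count_additive nu.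
Proof.
move=> p_tr mu_pos mu_ca [nu_fa nu_ge0] Amu_nu.
have [p01 _ _ p_ca] := p_tr.
have p_pos x : pos_fa_measure (p x).
  split; first exact: count_additive_fin_additive (p_ca x).
  by move=> A mA; case/andP: (p01 x A mA).
apply: continuous_at_set0_count_additive nu_fa _ => B mB decrB capB0.
apply/cvgr0Pnorm_lt => del del_gt0.
have mu_ge0 : 0 <= mu setT by exact: mu_pos.2.
pose eps := del / 2 / (mu setT + 1).
have eps_gt0 : 0 < eps by rewrite !divr_gt0 // ltr_wpDl.
have eps_mu_le : eps * mu setT <= del / 2.
  rewrite mulrAC ler_pdivrMr ?ltr_wpDl // ler_wpM2l ?lerDl //.
  by rewrite divr_ge0 // ltW.
pose C n := [set x | eps < p x (B n)].
have mC n : measurable (C n) by exact: transition_superlevel_measurable.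
have decrC n : C n.+1 `<=` C n.
  move=> x /lt_le_trans; apply; exact: pos_fa_measure_le (p_pos x) _ _ (decrB n).
have capC0 : \bigcap_n C n = set0 by exact: transition_superlevel_bigcap.
have /cvgr0_norm_lt/(_ (del / 2)) muC_lt :=
  count_additive_continuous_at_set0 _ mu_ca C mC decrC capC0.
near=> n.
rewrite ger0_norm ?nu_ge0 // -Amu_nu // [del]splitr.
have int_le :=
  fa_integral_le mu_pos (fun x => p01 x _ (mB n)) (mC n) (ltW eps_gt0).
apply: le_lt_trans (int_le _) _; first by move=> x /negP; rewrite -leNgt.
apply: ltr_leD eps_mu_le; apply: le_lt_trans (ler_norm _) _.
by near: n; apply: muC_lt; rewrite divr_gt0.
Unshelve. all: by end_near.
Qed.

Section cycles.
Context {p : X -> set X -> R} {m : nat} {mu : nat -> set X -> R}.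
Context (p_tr : transition_function p) (mu_cycle : measure_cycle p m mu).

Lemma cycle_succ_count_additive i : (i < m)%N ->
  count_additive (mu i) -> count_additive (mu (i.+1 %% m)).
Proof.
case: mu_cycle => m_gt0 mu_pos _ mu_succ mu_last im mui_ca.
have [iSm|] := ltnP i.+1 m.
  rewrite modn_small //.
  exact: markov_op_count_additive p_tr (mu_pos _ im) mui_ca
    (mu_pos _ iSm) (mu_succ _ iSm).
rewrite leq_eqVlt ltnNge im orbF => /eqP m_eq; rewrite m_eq modnn.
have mu_i0 : meas_eq (markov_op p (mu i)) (mu 0%N) by rewrite m_eq in mu_last.
exact: markov_op_count_additive p_tr (mu_pos _ im) mui_ca (mu_pos _ m_gt0) mu_i0.
Qed.

Lemma cycle_count_additive i j : (i < m)%N -> (j < m)%N ->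
  count_additive (mu i) -> count_additive (mu j).
Proof.
move=> im jm mui_ca; have m_gt0 : (0 < m)%N by case: mu_cycle.
have mu_ca k : count_additive (mu ((i + k) %% m)).
  elim: k => [|k IH]; first by rewrite addn0 modn_small.
  rewrite addnS -addn1 -modnDml addn1.
  exact: cycle_succ_count_additive (ltn_pmod _ m_gt0) IH.
have := mu_ca (j + m - i)%N.
by rewrite subnKC ?modnDr ?modn_small // (leq_trans (ltnW im)) ?leq_addl.
Qed.

End cycles.

End cycle_of_measures.

Theorem theorem4p2 (d : measure_display) (X : measurableType d) (R : realType)
  (p : X -> set X -> R) (m : nat) (mu : nat -> set X -> R) :
  infinite_set (@setT X) ->
  (forall x : X, measurable [set x]) ->
  transition_function p ->
  measure_cycle p m mu ->
  (exists2 i, (i < m)%N & count_additive (mu i)) ->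
  (forall i, (i < m)%N -> count_additive (mu i)) /\
  count_additive (mean_measure m mu).
Proof.
move=> _ _ p_tr mu_cycle [i im mui_ca].
have mu_ca j : (j < m)%N -> count_additive (mu j).
  by move=> jm; exact: cycle_count_additive p_tr mu_cycle _ _ im jm mui_ca.
split=> //; apply: count_additive_scale; exact: count_additive_sum.
Qed.
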